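(* Let $(G, \phi, (g_1,\dots,g_n))$ be an $n$-expansion group. Then $((L_\bullet(G), [\,,]_G), L_\bullet(\phi))$ is an $n$-expansion Lie algebra.
   Context: $V_{[n]} = \mathbb{F}_2^n$ with basis $e_1,\dots,e_n$. An $n$-expansion group is a triple $(G,\phi,(g_1,\dots,g_n))$: $G$ a group, $\phi: G\to V_{[n]}$ a homomorphism with $\phi(g_i) = e_i$, $g_i^2 = 1$ for all $i$, $\ker\phi$ an elementary abelian $2$-group, and $[G,G]=\ker\phi$. For a group $G$ let $G^{(1)} = G$, $G^{(i+1)} = [G, G^{(i)}]$, $L_m(G) = G^{(m)}/G^{(m+1)}$, $L_\bullet(G) = \bigoplus_{m\geq1}L_m(G)$ with bracket $[\,,]_G$ induced by group commutators (a graded Lie algebra), and for a homomorphism $\phi$, $L_\bullet(\phi)$ the induced graded Lie algebra homomorphism; $V_{[n]}$ is viewed as a graded Lie algebra concentrated in degree $1$ with zero bracket. A graded Lie algebra over $\mathbb{F}_2$ is a Lie algebra $L_\bullet = \bigoplus_{m\geq1}L_m$ over $\mathbb{F}_2$ with $[L_h,L_k]\subseteq L_{h+k}$. An $n$-expansion Lie algebra is a pair $(L_\bullet,\psi)$ with: (1) $L_\bullet$ a graded Lie algebra over $\mathbb{F}_2$ and $\psi: L_\bullet\to V_{[n]}$ a surjective graded Lie algebra homomorphism; (2) $\ker\psi$ an abelian subalgebra; (3) $[L_\bullet,L_\bullet] = \ker\psi$; (4) for each $i\geq4$ and $\sigma_1,\dots,\sigma_i\in L_1$, the element $[\sigma_1,[\sigma_2,[\dots,[\sigma_{i-1},\sigma_i]\dots]]]$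 does not depend on the order of $\sigma_1,\dots,\sigma_{i-2}$ and vanishes whenever $\sigma_s=\sigma_t$ for distinct $s,t\in\{1,\dots,i-2\}$; moreover, if $\tau_1,\tau_2\in L_1$ and $\psi(\tau_1)\in\{e_1,\dots,e_n\}$, then $[\tau_1,[\tau_1,\tau_2]]=0$. *)

From HB Require Import structures.
From mathcomp Require Import all_boot all_order all_algebra all_fingroup all_solvable.
From mathcomp Require Import abelian nilpotent.
From Stdlib Require Import Permutation.
Set Implicit Arguments. Unset Strict Implicit. Unset Printing Implicit Defensive.
Import GRing.Theory.
Local Open Scope nat_scope.

Definition Vn (n : nat) := 'rV['F_2]_n.
Definition e_ (n : nat) (i : 'I_n) : Vn n := delta_mx (@ord0 0) i.

Definition n_expansion_group (gT : finGroupType) (G : {group gT}) (n : nat)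
    (phi : gT -> Vn n) (g : 'I_n -> gT) : Prop :=
  [/\ {in G &, forall x y, phi (x * y)%g = (phi x + phi y)%R},
      (forall i, g i \in G /\ (g i ^+ 2 = 1)%g /\ phi (g i) = e_ i),
      (2.-abelem [set x in G | phi x == 0%R])%g &
      ([~: G, G] = [set x in G | phi x == 0%R])%g].

(* Graded Lie algebras over F_2, given as raw data on a carrier         *)
(* predicate inL of a type T:                                           *)
(*   add, zero : the additive structure (an F_2-vector space: since the *)
(*               only scalars are 0 and 1, it is an abelian group with  *)
(*               x + x = 0, the scalar action being forced),            *)
(*   hom m x   : x is homogeneous of degree m (x \in L_m), m >= 1.      *)
Section GradedLie.
Variables (T : Type) (inL : T -> Prop) (add : T -> T -> T) (zero : T)
          (br : T -> T -> T) (hom : nat -> T -> Prop).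

Definition lsum (s : seq T) : T := foldr add zero s.

Definition is_F2_space : Prop :=
  [/\ inL zero,
      (forall x y, inL x -> inL y -> inL (add x y)),
      (forall x y, inL x -> inL y -> add x y = add y x),
      (forall x y w, inL x -> inL y -> inL w -> add x (add y w) = add (add x y) w)
    & (forall x, inL x -> add zero x = x /\ add x x = zero)].

Definition is_Lie_bracket : Prop :=
  [/\ (forall x y, inL x -> inL y -> inL (br x y)),
      (forall x y w, inL x -> inL y -> inL w ->
          br (add x y) w = add (br x w) (br y w) /\
          br w (add x y) = add (br w x) (br w y)),
      (forall x, inL x -> br x x = zero)
    & (forall x y w, inL x -> inL y -> inL w ->
          add (br x (br y w)) (add (br y (br w x)) (br w (br x y))) = zero)].

Definition is_grading : Prop :=
  [/\ (forall m, 0 < m -> hom m zero /\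
         forall x y, hom m x -> hom m y -> hom m (add x y)),
      (forall m x, 0 < m -> hom m x -> inL x),
      (forall x, inL x -> exists s : seq T,
          (forall j, j < size s -> hom j.+1 (nth zero s j)) /\ x = lsum s),
      (forall s : seq T, (forall j, j < size s -> hom j.+1 (nth zero s j)) ->
          lsum s = zero -> forall j, j < size s -> nth zero s j = zero)
    & (forall h k x y, 0 < h -> 0 < k -> hom h x -> hom k y -> hom (h + k) (br x y))].

Definition is_graded_Lie_F2 : Prop :=
  [/\ is_F2_space, is_Lie_bracket & is_grading].

(* A surjective graded Lie algebra homomorphism onto V_[n], the latter *)
(* concentrated in degree 1 with zero bracket.                          *)
Definition is_graded_Lie_hom_onto_V (n : nat) (psi : T -> Vn n) : Prop :=
  [/\ psi zero = 0%R,
      (forall x y, inL x -> inL y -> psi (add x y) = (psi x + psi y)%R),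
      (forall m x, 2 <= m -> hom m x -> psi x = 0%R),
      (forall x y, inL x -> inL y -> psi (br x y) = 0%R)
    & (forall v : Vn n, exists2 x, inL x & psi x = v)].

Definition itbr (s : seq T) (a b : T) : T := foldr br (br a b) s.

Definition n_expansion_Lie (n : nat) (psi : T -> Vn n) : Prop :=
  [/\ is_graded_Lie_F2 /\ is_graded_Lie_hom_onto_V psi,
      (forall x y, inL x -> inL y -> psi x = 0%R -> psi y = 0%R ->
         [/\ psi (add x y) = 0%R, psi (br x y) = 0%R & br x y = zero]),
      (* (3) [L, L] = ker psi  ([L,L] = F_2-span of all brackets) *)
      (forall x, inL x -> (psi x = 0%R <->
         exists s : seq (T * T),
           (forall j, j < size s -> inL (nth (zero, zero) s j).1 /\
                                    inL (nth (zero, zero) s j).2) /\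
           x = lsum [seq br p.1 p.2 | p <- s])),
      (forall (s s' : seq T) (a b : T), 2 <= size s ->
         (forall j, j < size s -> hom 1 (nth zero s j)) -> hom 1 a -> hom 1 b ->
         Permutation s s' -> itbr s a b = itbr s' a b) /\
      (forall (s : seq T) (a b : T), 2 <= size s ->
         (forall j, j < size s -> hom 1 (nth zero s j)) -> hom 1 a -> hom 1 b ->
         forall j1 j2, j1 < j2 -> j2 < size s -> nth zero s j1 = nth zero s j2 ->
         itbr s a b = zero)
    & (forall t1 t2, hom 1 t1 -> hom 1 t2 -> (exists i : 'I_n, psi t1 = e_ i) ->
         br t1 (br t1 t2) = zero)].

End GradedLie.

(* The graded Lie algebra L_.(G) = (+)_{m>=1} G^(m)/G^(m+1), where     *)
(* G^(m) = 'L_m(G) (lower central series, 'L_1(G) = G).  An element is *)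
(* a family f with f m a coset of 'L_(m+1)(G) lying in 'L_m(G) /       *)
(* 'L_(m+1)(G), trivial for m = 0 and for all large m.                 *)
Section LieOfGroup.
Variables (gT : finGroupType) (G : {group gT}).

Definition LGT := forall m : nat, coset_of ('L_m.+1(G)).

Definition LG_in (f : LGT) : Prop :=
  [/\ f 0 = 1%g,
      (forall m, f m \in ('L_m(G) / 'L_m.+1(G))%g)
    & exists N, forall m, N <= m -> f m = 1%g].

Definition LG_add (f f' : LGT) : LGT := fun m => (f m * f' m)%g.
Definition LG_zero : LGT := fun m => 1%g.

(* [x G^(h+1), y G^(k+1)] = [x, y] G^(h+k+1), extended bilinearly *)
Definition LG_br (f f' : LGT) : LGT := fun m =>
  (\prod_(1 <= h < m) coset ('L_m.+1(G)) [~ repr (f h), repr (f' (m - h))])%g.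

Definition LG_hom (m : nat) (f : LGT) : Prop :=
  LG_in f /\ forall k, k <> m -> f k = 1%g.

(* L_.(phi) : L_.(G) -> L_.(V_[n]) = V_[n] (degree 1) *)
Definition LG_phi (n : nat) (phi : gT -> Vn n) (f : LGT) : Vn n :=
  phi (repr (f 1)).

End LieOfGroup.

From mathcomp Require Import all_boot all_order all_algebra all_fingroup all_solvable.
From mathcomp Require Import abelian nilpotent zify.
From Stdlib Require Import Permutation FunctionalExtensionality.
Set Implicit Arguments. Unset Strict Implicit. Unset Printing Implicit Defensive.
Import GRing.Theory.

(* The graded pieces G^(m)/G^(m+1) are F_2-vector spaces: for m = 1 because phi
   embeds G/G^(2) into V_[n], and for m >= 2 because G^(2) = ker phi is elementary
   abelian.  As G^(2) is abelian, [G^(h), G^(k)] <= G^(h+k), so commutators of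
   representatives give a well-defined bilinear bracket; by bilinearity every axiom
   reduces to homogeneous elements, where it is a commutator identity in G modulo
   G^(2): Hall-Witt gives Jacobi, and for w in G^(2) we have [x,[y,w]] = [y,[x,w]]
   and [x,[x,w]] = 1, which give condition (4).  [L,L] = ker psi because each G^(m),
   m >= 2, is generated by commutators.  Finally, if phi x = e_i then x = g_i c with
   c in G^(2), so x^2 = [g_i, c] lies in G^(3) and [x,[x,y]] = [x^2, y] lies in G^(4). *)

Lemma forall_nthP (A : Type) (x0 : A) (P : A -> Prop) (s : seq A) :
  (forall j, j < size s -> P (nth x0 s j)) <-> List.Forall P s.
Proof.
elim: s => [|a s IH]; first by split=> // _ [].
split=> [H | /List.Forall_cons_iff [Pa /IH Ps] [|j] //= /Ps //].
by constructor; [apply: (H 0) | apply/IH => j; apply: (H j.+1)].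
Qed.

Lemma Permutation_size (A : Type) (s s' : seq A) : Permutation s s' -> size s = size s'.
Proof. by elim=> //= [x l l' _ -> | l l' l'' _ -> _ ->]. Qed.

Lemma prod_nat_only (rT : finGroupType) a b j (F : nat -> rT) : a <= j < b ->
  (forall i, a <= i < b -> i != j -> F i = 1%g) -> (\prod_(a <= i < b) F i = F j)%g.
Proof.
move=> jab F1; rewrite (eq_big_nat _ _ (F2 := fun i => if i == j then F i else 1%g)).
  by rewrite -big_mkcond big_nat1_eq jab.
by move=> i iab; case: eqVneq => // /(F1 i iab).
Qed.

Lemma prod_mulg_abelian (rT : finGroupType) (H : {group rT}) (I : Type) (r : seq I)
    (F1 F2 : I -> rT) : abelian H -> (forall i, F1 i \in H) -> (forall i, F2 i \in H) ->
  (\prod_(i <- r) (F1 i * F2 i) = \prod_(i <- r) F1 i * \prod_(i <- r) F2 i)%g.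
Proof.
move=> cHH F1H F2H; elim: r => [|a r IH]; first by rewrite !big_nil mulg1.
have prodH F : (forall i, F i \in H) -> (\prod_(i <- r) F i \in H)%g.
  by move=> FH; apply: group_prod.
rewrite !big_cons IH -!mulgA; congr (_ * _)%g; rewrite !mulgA; congr (_ * _)%g.
exact: (centsP cHH) _ (F2H a) _ (prodH _ F1H).
Qed.

Lemma Vn_addvv n (v : Vn n) : (v + v = 0)%R.
Proof. by apply/rowP=> j; rewrite !mxE addrr_pchar2 // pchar_Fp. Qed.

Lemma Vn_sum_support n (v : Vn n) : (\sum_(i < n | v ord0 i == 1) e_ i)%R = v.
Proof.
apply/rowP => j; rewrite summxE (eq_bigr (fun i => (j == i)%:R)%R) => [|i _]; last first.
  by rewrite mxE eqxx.
case: (eqVneq (v ord0 j) 1%R) => [vj|vj].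
  rewrite (bigD1 j) ?vj //= eqxx big1 ?addr0 // => i /andP[_ ij].
  by rewrite eq_sym (negbTE ij).
rewrite big1 => [|i vi]; last by case: eqP => // ji; rewrite ji vi in vj.
by case: (v ord0 j) vj => [[|[|k]]] //= Hk _; apply/val_inj.
Qed.

Section LowerCentralCommutators.
Local Open Scope group_scope.
Variables (gT : finGroupType) (G : {group gT}).

Lemma mem_lcn_sub m x : x \in 'L_m(G) -> x \in G.
Proof. exact: (subsetP (lcn_sub m G)). Qed.

Lemma mem_lcn_leq m k x : k <= m -> x \in 'L_m(G) -> x \in 'L_k(G).
Proof. by move=> km; apply: (subsetP (lcn_sub_leq G km)). Qed.

Lemma mem_lcn_norm m x : x \in G -> x \in 'N('L_m(G)).
Proof. exact: (subsetP (lcn_norm m G)). Qed.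

Lemma commg_mem_L2 x y : x \in G -> y \in G -> [~ x, y] \in 'L_2(G).
Proof. exact: mem_commg. Qed.

Hypothesis L2_abelem : 2.-abelem 'L_2(G).

Lemma mulgg_L2 x : x \in 'L_2(G) -> x * x = 1.
Proof.
by move=> xL; case/(abelemP (isT : prime 2)): L2_abelem => _ /(_ x xL); rewrite expg2.
Qed.

Lemma invg_L2 x : x \in 'L_2(G) -> x^-1 = x.
Proof. by move=> xL; apply/eqP; rewrite eq_invg_mul mulgg_L2. Qed.

Lemma mulgC_L2 a b : a \in 'L_2(G) -> b \in 'L_2(G) -> a * b = b * a.
Proof. by move=> aL bL; apply: (centsP (abelem_abelian L2_abelem)). Qed.

Lemma commg_L2 a b : a \in 'L_2(G) -> b \in 'L_2(G) -> [~ a, b] = 1.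
Proof. by move=> aL bL; apply/eqP/commgP/mulgC_L2. Qed.

Lemma conjg_L2 a c : a \in 'L_2(G) -> c \in 'L_2(G) -> a ^ c = a.
Proof. by move=> aL cL; apply/conjg_fixP; rewrite commg_L2. Qed.

Lemma memJ_L2 a x : a \in 'L_2(G) -> x \in G -> a ^ x \in 'L_2(G).
Proof. by move=> aL xG; rewrite memJ_norm ?mem_lcn_norm. Qed.

Lemma commg_L2E x w : w \in 'L_2(G) -> [~ x, w] = w ^ x * w.
Proof. by move=> wL; rewrite commgEr invg_L2. Qed.

Lemma commg_memr_L2 x w : x \in G -> w \in 'L_2(G) -> [~ x, w] \in 'L_2(G).
Proof. by move=> xG wL; rewrite commg_mem_L2 // (mem_lcn_sub wL). Qed.

(* Beyond [L_h, G] <= L_(h+1), only h, k >= 2 remains, where the commutator is trivial. *)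
Lemma mem_lcn_commg h k x y : 0 < h -> 0 < k -> x \in 'L_h(G) -> y \in 'L_k(G) ->
  [~ x, y] \in 'L_(h + k)(G).
Proof.
case: h => // [[|h]] _; case: k => // [[|k]] _ xL yL.
- exact: mem_commg.
- by rewrite add1n lcnSn commGC mem_commg.
- by rewrite addn1 lcnSn mem_commg ?(mem_lcn_sub yL).
- by rewrite commg_L2 ?group1 // (mem_lcn_leq _ xL, mem_lcn_leq _ yL).
Qed.

Lemma commgCA_L2 x y w : x \in G -> y \in G -> w \in 'L_2(G) ->
  [~ x, [~ y, w]] = [~ y, [~ x, w]].
Proof.
move=> xG yG wL.
rewrite (commg_L2E x (commg_memr_L2 yG wL)) (commg_L2E y (commg_memr_L2 xG wL)).
rewrite (commg_L2E y wL) (commg_L2E x wL) (conjMg (w ^ y)) (conjMg (w ^ x)).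
rewrite -!conjgM.
have -> : w ^ (y * x) = w ^ (x * y).
  (* y x = x y [y, x] and [y, x] in L_2 centralises w *)
  rewrite (commgC y x) (conjgM w (x * y)) (conjg_L2 (a := w ^ (x * y))) //.
    by rewrite memJ_L2 ?groupM.
  exact: commg_mem_L2.
have wxL := memJ_L2 wL xG; have wyL := memJ_L2 wL yG.
move: (w ^ (x * y)) (w ^ x) (w ^ y) wxL wyL => a b c bL cL.
by rewrite -!mulgA (mulgA b) (mulgA c) (mulgC_L2 bL cL).
Qed.

Hypothesis sqr_L2 : {in G, forall x, x * x \in 'L_2(G)}.

Lemma commg_twice_L2 x w : x \in G -> w \in 'L_2(G) -> [~ x, [~ x, w]] = 1.
Proof.
move=> xG wL.
rewrite (commg_L2E x (commg_memr_L2 xG wL)) (commg_L2E x wL).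
rewrite (conjMg (w ^ x)) -conjgM (conjg_L2 wL (sqr_L2 xG)).
have wxL := memJ_L2 wL xG; move: (w ^ x) wxL => b bL.
by rewrite -!mulgA (mulgA b) mulgg_L2 // mul1g mulgg_L2.
Qed.

Lemma Hall_Witt_factor_L2 x y z : x \in G -> y \in G -> z \in G ->
  [~ x, y^-1, z] ^ y = [~ x, y] * [~ x, y] ^ z.
Proof.
move=> xG yG zG.
have vL : [~ x, y^-1] \in 'L_2(G) by rewrite commg_mem_L2 ?groupV.
have vy : [~ x, y^-1] ^ y = [~ x, y].
  rewrite -(invg_L2 (commg_mem_L2 xG yG)) invgR.
  by rewrite /conjg /commg; congr (_ * _); rewrite !conjgE invgK !mulgA mulgVK.
rewrite (commgEl [~ x, y^-1] z) (invg_L2 vL) (conjMg _ _ y) -(conjgM _ z y) vy.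
have -> : z * y = y * z ^ y by rewrite conjgC.
rewrite (conjgM _ y (z ^ y)) vy (conjg_mulR z y) (conjgM _ z [~ z, y]).
by rewrite (conjg_L2 (memJ_L2 (commg_mem_L2 xG yG) zG) (commg_mem_L2 zG yG)).
Qed.

Lemma Jacobi_commg x y z : x \in G -> y \in G -> z \in G ->
  [~ x, [~ y, z]] * [~ y, [~ z, x]] * [~ z, [~ x, y]] = 1.
Proof.
move=> xG yG zG.
have aL := commg_mem_L2 xG yG; have bL := commg_mem_L2 yG zG.
have cL := commg_mem_L2 zG xG.
have := Hall_Witt_identity x y z; rewrite !Hall_Witt_factor_L2 //.
rewrite (commg_L2E x bL) (commg_L2E y cL) (commg_L2E z aL).
move: [~ x, y] [~ y, z] [~ z, x] aL bL cL => a b c aL bL cL.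
rewrite (mulgC_L2 (memJ_L2 bL xG) bL) (mulgC_L2 (memJ_L2 cL yG) cL).
rewrite (mulgC_L2 (memJ_L2 aL zG) aL).
have p1L : a * a ^ z \in 'L_2(G) by rewrite groupM ?memJ_L2.
have p2L : b * b ^ x \in 'L_2(G) by rewrite groupM ?memJ_L2.
have p3L : c * c ^ y \in 'L_2(G) by rewrite groupM ?memJ_L2.
move: (a * a ^ z) (b * b ^ x) (c * c ^ y) p1L p2L p3L => p1 p2 p3 p1L p2L p3L.
by rewrite (mulgC_L2 (groupM p2L p3L) p1L) mulgA.
Qed.

(* x = t c has x^2 = [t, c] in L_3, and [x, [x, y]] = [x^2, y]. *)
Lemma commg_twice_involution t c y : t \in G -> t * t = 1 -> c \in 'L_2(G) ->
  y \in G -> [~ t * c, [~ t * c, y]] \in 'L_4(G).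
Proof.
move=> tG tt cL yG; have xG : t * c \in G by rewrite groupM ?(mem_lcn_sub cL).
have tV : t^-1 = t by apply/eqP; rewrite eq_invg_mul tt.
have xx : t * c * (t * c) = [~ t, c].
  by rewrite commg_L2E // conjgE tV -!mulgA.
rewrite commg_L2E ?commg_mem_L2 // -commMgJ xx.
by apply: (mem_lcn_commg (h := 3) (k := 1)) => //; apply: (mem_lcn_commg (h := 1) (k := 2)).
Qed.

Definition itcomm (s : seq gT) (w : gT) : gT := foldr commg w s.

Lemma mem_lcn_itcomm s w k : List.Forall (fun t => t \in G) s -> 0 < k ->
  w \in 'L_k(G) -> itcomm s w \in 'L_(size s + k)(G).
Proof.
move=> + k0 wL; elim: s => [|t s IH] //= /List.Forall_cons_iff [tG /IH sL].
by rewrite -add1n -addnA mem_lcn_commg // addn_gt0 k0 orbT.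
Qed.

Lemma itcomm_perm s s' w : Permutation s s' -> List.Forall (fun t => t \in G) s ->
  w \in 'L_2(G) -> itcomm s w = itcomm s' w.
Proof.
move=> P + wL; elim: P => [//| t s1 s2 _ IH | t1 t2 s1 | s1 s2 s3 P12 IH12 _ IH23] /=.
- by move=> /List.Forall_cons_iff [_ /IH ->].
- move=> /List.Forall_cons_iff [t2G /List.Forall_cons_iff [t1G s1G]].
  by rewrite commgCA_L2 // (mem_lcn_leq _ (mem_lcn_itcomm s1G _ wL)) ?leq_addl.
- by move=> sG; rewrite IH12 // IH23 //; apply: Permutation_Forall P12 sG.
Qed.

Lemma itcomm_dup s w : List.Forall (fun t => t \in G) s -> w \in 'L_2(G) ->
  ~~ uniq s -> itcomm s w = 1.
Proof.
move=> + wL; elim: s => [|t s IH] //= /List.Forall_cons_iff [tG sG].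
case: (boolP (t \in s)) => [ts _ | _ /= /(IH sG) ->]; last by rewrite commg1.
case/splitPr: ts sG => s1 s2 sG.
have Pts := Permutation_sym (Permutation_middle s1 s2 t).
have /List.Forall_cons_iff [_ s12G] := Permutation_Forall Pts sG.
rewrite (itcomm_perm Pts) //= commg_twice_L2 //.
by rewrite (mem_lcn_leq _ (mem_lcn_itcomm s12G _ wL)) ?leq_addl.
Qed.

End LowerCentralCommutators.

Section LowerCentralQuotients.
Local Open Scope group_scope.
Variables (gT : finGroupType) (G : {group gT}).
Hypotheses (L2_abelem : 2.-abelem 'L_2(G)) (sqr_L2 : {in G, forall x, x * x \in 'L_2(G)}).

Local Notation C m := (coset 'L_m.+1(G)).
Local Notation Q m := ('L_m(G) / 'L_m.+1(G)).

Lemma coset_lcnM m x y : x \in G -> y \in G -> C m (x * y) = C m x * C m y.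
Proof. by move=> xG yG; rewrite morphM ?mem_lcn_norm. Qed.

Lemma coset_lcnV m x : x \in G -> C m x^-1 = (C m x)^-1.
Proof. by move=> xG; rewrite morphV ?mem_lcn_norm. Qed.

Lemma coset_lcn_eqP m x x' : x \in G -> x' \in G -> C m x = C m x' ->
  x^-1 * x' \in 'L_m.+1(G).
Proof.
move=> xG x'G e; apply: coset_idr; first by rewrite mem_lcn_norm ?groupM ?groupV.
by rewrite coset_lcnM ?groupV // coset_lcnV // e mulVg.
Qed.

Lemma repr_lcn_quo m u : u \in Q m -> repr u \in 'L_m(G).
Proof.
case/morphimP=> x _ xL ->.
have := mem_repr_coset (C m x).
rewrite val_coset ?mem_lcn_norm ?(mem_lcn_sub xL) // mem_rcoset => cL.
by rewrite -(mulgKV x (repr _)) groupM // (mem_lcn_leq _ cL).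
Qed.

Lemma quo_lcn_abelian m : abelian (Q m).
Proof. exact: abelianS (lcn_central m G) (center_abelian _). Qed.

Lemma quo_lcn_mulgC m u v : u \in Q m -> v \in Q m -> u * v = v * u.
Proof. by move=> uQ vQ; apply: (centsP (quo_lcn_abelian m)). Qed.

Lemma quo_lcn_mulgg m u : u \in Q m -> u * u = 1.
Proof.
case/morphimP=> x _ xL -> {u}; have xG := mem_lcn_sub xL.
rewrite -coset_lcnM // coset_id //.
case: m xL => [|[|m]] xL; [exact: groupM | exact: sqr_L2 |].
by rewrite (mulgg_L2 L2_abelem) ?group1 // (mem_lcn_leq _ xL).
Qed.

Lemma quo_lcn_invg m u : u \in Q m -> u^-1 = u.
Proof. by move=> uQ; apply/eqP; rewrite eq_invg_mul quo_lcn_mulgg. Qed.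

Lemma coset_commMg h k x1 x2 y : 0 < h -> 0 < k ->
  x1 \in 'L_h(G) -> x2 \in 'L_h(G) -> y \in 'L_k(G) ->
  C (h + k) [~ x1 * x2, y] = C (h + k) [~ x1, y] * C (h + k) [~ x2, y].
Proof.
move=> h0 k0 x1L x2L yL.
have b1L := mem_lcn_commg L2_abelem h0 k0 x1L yL.
have b2L := mem_lcn_commg L2_abelem h0 k0 x2L yL.
have b3L : [~ [~ x1, y], x2] \in 'L_(h + k).+1(G).
  apply: mem_lcn_leq (mem_lcn_commg L2_abelem _ h0 b1L x2L); last by rewrite addn_gt0 h0.
  by rewrite -addn1 leq_add2l.
have [b1G b2G b3G] := And3 (mem_lcn_sub b1L) (mem_lcn_sub b2L) (mem_lcn_sub b3L).
by rewrite commMgJ conjg_mulR (coset_lcnM _ (groupM b1G b3G) b2G) (coset_kerr _ b3L).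
Qed.

Lemma coset_commgM h k x y1 y2 : 0 < h -> 0 < k ->
  x \in 'L_h(G) -> y1 \in 'L_k(G) -> y2 \in 'L_k(G) ->
  C (h + k) [~ x, y1 * y2] = C (h + k) [~ x, y1] * C (h + k) [~ x, y2].
Proof.
move=> h0 k0 xL y1L y2L.
have b1L := mem_lcn_commg L2_abelem h0 k0 xL y1L.
have b2L := mem_lcn_commg L2_abelem h0 k0 xL y2L.
have b3L : [~ [~ x, y1], y2] \in 'L_(h + k).+1(G).
  apply: mem_lcn_leq (mem_lcn_commg L2_abelem _ k0 b1L y2L); last by rewrite addn_gt0 h0.
  by rewrite -addn1 leq_add2l.
have [b1G b2G b3G] := And3 (mem_lcn_sub b1L) (mem_lcn_sub b2L) (mem_lcn_sub b3L).
rewrite commgMJ conjg_mulR (coset_lcnM _ b2G (groupM b1G b3G)) (coset_kerr _ b3L).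
by apply: quo_lcn_mulgC; apply: mem_quotient.
Qed.

Lemma coset_commg_eq h k x x' y y' : 0 < h -> 0 < k ->
  x \in 'L_h(G) -> x' \in 'L_h(G) -> y \in 'L_k(G) -> y' \in 'L_k(G) ->
  C h x = C h x' -> C k y = C k y' -> C (h + k) [~ x, y] = C (h + k) [~ x', y'].
Proof.
move=> h0 k0 xL x'L yL y'L ex ey.
have cL := coset_lcn_eqP (mem_lcn_sub xL) (mem_lcn_sub x'L) ex.
have dL := coset_lcn_eqP (mem_lcn_sub yL) (mem_lcn_sub y'L) ey.
have cL' : x^-1 * x' \in 'L_h(G) by apply: mem_lcn_leq cL.
have dL' : y^-1 * y' \in 'L_k(G) by apply: mem_lcn_leq dL.
have e1 : [~ x^-1 * x', y * (y^-1 * y')] \in 'L_(h + k).+1(G).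
  by rewrite -addSn; apply: mem_lcn_commg => //; apply: groupM.
have e2 : [~ x, y^-1 * y'] \in 'L_(h + k).+1(G).
  by rewrite -addnS; apply: mem_lcn_commg.
rewrite -(mulKVg x x') -(mulKVg y y') (coset_commMg h0 k0 xL cL' (groupM yL dL')).
by rewrite (coset_commgM h0 k0 xL yL dL') (coset_id e1) (coset_id e2) !mulg1.
Qed.

Lemma coset_commgC h k x y : 0 < h -> 0 < k -> x \in 'L_h(G) -> y \in 'L_k(G) ->
  C (h + k) [~ y, x] = C (h + k) [~ x, y].
Proof.
move=> h0 k0 xL yL; have bL := mem_lcn_commg L2_abelem h0 k0 xL yL.
by rewrite -invgR coset_lcnV ?(mem_lcn_sub bL) ?quo_lcn_invg ?mem_quotient.
Qed.

End LowerCentralQuotients.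



Section LieAlgebraOfGroup.
Local Open Scope group_scope.
Variables (gT : finGroupType) (G : {group gT}).
Hypotheses (L2_abelem : 2.-abelem 'L_2(G)) (sqr_L2 : {in G, forall x, x * x \in 'L_2(G)}).

Local Notation C m := (coset 'L_m.+1(G)).
Local Notation Q m := ('L_m(G) / 'L_m.+1(G)).
Local Notation T := (LGT G).
Local Notation inL := (@LG_in gT G).
Local Notation add := (@LG_add gT G).
Local Notation zero := (@LG_zero gT G).
Local Notation br := (@LG_br gT G).
Local Notation hom := (@LG_hom gT G).
Local Notation sumL := (lsum add zero).

Lemma LG_ext (f f' : T) : (forall m, f m = f' m) -> f = f'.
Proof. exact: functional_extensionality_dep. Qed.

Lemma LG_in_quo f m : inL f -> f m \in Q m.
Proof. by case=> _ fQ _; apply: fQ. Qed.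

Lemma LG_repr_lcn f m : inL f -> repr (f m) \in 'L_m(G).
Proof. by move=> fL; apply/repr_lcn_quo/LG_in_quo. Qed.

Lemma LG_repr_mem f m : inL f -> repr (f m) \in G.
Proof. by move=> fL; apply/mem_lcn_sub/LG_repr_lcn. Qed.

Lemma LG_in_zero : inL zero.
Proof. by split=> // [m|]; [rewrite group1 | exists 0]. Qed.

Lemma LG_in_add x y : inL x -> inL y -> inL (add x y).
Proof.
move=> [x0 xQ [Nx xN]] [y0 yQ [Ny yN]]; split=> [|m|].
- by rewrite /LG_add x0 y0 mulg1.
- by rewrite /LG_add groupM ?xQ ?yQ.
by exists (maxn Nx Ny) => m; rewrite geq_max /LG_add => /andP[/xN-> /yN->]; rewrite mulg1.
Qed.

Lemma LG_addC x y : inL x -> inL y -> add x y = add y x.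
Proof. by move=> xL yL; apply: LG_ext => m; apply: quo_lcn_mulgC; apply: LG_in_quo. Qed.

Lemma LG_addA x y w : add x (add y w) = add (add x y) w.
Proof. by apply: LG_ext => m; apply: mulgA. Qed.

Lemma LG_add0 x : add zero x = x.
Proof. by apply: LG_ext => m; apply: mul1g. Qed.

Lemma LG_addx0 x : add x zero = x.
Proof. by apply: LG_ext => m; apply: mulg1. Qed.

Lemma LG_addxx x : inL x -> add x x = zero.
Proof.
by move=> xL; apply: LG_ext => m; apply: (quo_lcn_mulgg L2_abelem sqr_L2); apply: LG_in_quo.
Qed.

Lemma LG_addACA a b c d : inL b -> inL c ->
  add (add a b) (add c d) = add (add a c) (add b d).
Proof. by move=> bL cL; rewrite -!LG_addA (LG_addA b) (LG_addC bL cL) -LG_addA. Qed.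

Lemma LG_sum_at (s : seq T) m : sumL s m = \prod_(f <- s) f m.
Proof. by elim: s => [|a s IH]; rewrite ?big_nil ?big_cons //= /LG_add IH. Qed.

Lemma LG_hom_in d f : hom d f -> inL f.
Proof. by case. Qed.

Lemma LG_hom_zero d : hom d zero.
Proof. by split; [apply: LG_in_zero |]. Qed.

Lemma LG_hom_add d x y : hom d x -> hom d y -> hom d (add x y).
Proof.
move=> [xL xd] [yL yd]; split=> [|k kd]; first exact: LG_in_add.
by rewrite /LG_add xd // yd // mulg1.
Qed.

Definition LG_coset d (w : gT) : T := fun m => if m == d then C m w else 1.

Lemma LG_coset_hom d w : 0 < d -> w \in 'L_d(G) -> hom d (LG_coset d w).
Proof.
move=> d0 wL; split=> [|k /eqP/negbTE kd]; last by rewrite /LG_coset kd.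
split=> [|m|]; rewrite /LG_coset.
- by case: eqP => // e; rewrite -e in d0.
- by case: eqP => [->|_]; [apply: mem_quotient | apply: group1].
by exists d.+1 => m dm; case: eqP => // md; rewrite md ltnn in dm.
Qed.

Lemma LG_coset_eq d w w' : C d w = C d w' -> LG_coset d w = LG_coset d w'.
Proof. by move=> e; apply: LG_ext => m; rewrite /LG_coset; case: eqP => // ->. Qed.

Lemma LG_coset_id d w : w \in 'L_d.+1(G) -> LG_coset d w = zero.
Proof.
by move=> wL; apply: LG_ext => m; rewrite /LG_coset; case: eqP => // ->; rewrite coset_id.
Qed.

Lemma LG_coset1 d : LG_coset d 1 = zero.
Proof. exact/LG_coset_id/group1. Qed.

Lemma LG_cosetM d w1 w2 : w1 \in G -> w2 \in G ->
  LG_coset d (w1 * w2) = add (LG_coset d w1) (LG_coset d w2).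
Proof.
move=> w1G w2G; apply: LG_ext => m; rewrite /LG_add /LG_coset.
by case: eqP => _; rewrite ?coset_lcnM ?mulg1.
Qed.

Lemma LG_hom_coset d x : hom d x -> x = LG_coset d (repr (x d)).
Proof.
case=> _ xd; apply: LG_ext => m; rewrite /LG_coset.
by case: eqP => [->|/xd ->]; rewrite ?coset_reprK.
Qed.

Lemma LG_decomp x : inL x ->
  exists N, x = sumL [seq LG_coset j (repr (x j)) | j <- iota 1 N].
Proof.
case=> x0 _ [N xN]; exists N; apply: LG_ext => m.
rewrite LG_sum_at big_map /LG_coset.
rewrite (eq_bigr (fun j => if j == m then C m (repr (x m)) else 1)); last first.
  by move=> j _; rewrite eq_sym; case: eqP => // ->.
have -> : iota 1 N = index_iota 1 N.+1 by rewrite /index_iota subSS subn0.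
rewrite -big_mkcond big_nat1_eq coset_reprK ltnS.
by case: m => [|m] //=; case: leqP => // Nm; rewrite xN // ltnW.
Qed.

Lemma LG_ind (P : T -> Prop) : P zero ->
    (forall x y, inL x -> inL y -> P x -> P y -> P (add x y)) ->
    (forall d x, 0 < d -> hom d x -> P x) ->
  forall x, inL x -> P x.
Proof.
move=> P0 PD Phom x xL; have [N ->] := LG_decomp xL.
suff [] : P (sumL [seq LG_coset j (repr (x j)) | j <- iota 1 N]) /\
          inL (sumL [seq LG_coset j (repr (x j)) | j <- iota 1 N]) by [].
have : all (leq 1) (iota 1 N) by apply/allP => j; rewrite mem_iota => /andP[].
elim: (iota 1 N) => [_ | j r IH /andP[j0 /IH [Pr rL]]] /=; first by split; [|exact: LG_in_zero].
have xj := LG_coset_hom j0 (LG_repr_lcn j xL); have xjL := LG_hom_in xj.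
by split; [apply: (PD _ _ xjL rL (Phom _ _ j0 xj) Pr) | apply: LG_in_add].
Qed.

(* Also for the junk indices i = 0 and i >= m, since x 0 = 1 and m - i truncates to 0. *)
Lemma LG_br_term_quo x y m i : inL x -> inL y ->
  C m [~ repr (x i), repr (y (m - i))] \in Q m.
Proof.
move=> xL yL; case: (xL) => x0 _ _; case: (yL) => y0 _ _.
case: (posnP i) => [->|i0]; first by rewrite x0 repr_coset1 comm1g morph1 group1.
case: (leqP m i) => [mi|im].
  by move: mi; rewrite -subn_eq0 => /eqP->; rewrite y0 repr_coset1 commg1 morph1 group1.
apply: mem_quotient.
have := @mem_lcn_commg _ _ L2_abelem i (m - i) (repr (x i)) (repr (y (m - i))) i0.
by rewrite subnKC ?(ltnW im) // subn_gt0; apply; rewrite ?LG_repr_lcn.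
Qed.

Lemma LG_br_in x y : inL x -> inL y -> inL (br x y).
Proof.
move=> xL yL; split=> [|m|]; rewrite /LG_br.
- by rewrite big_geq.
- by rewrite big_seq; apply: group_prod => i _; apply: LG_br_term_quo.
case: xL => _ _ [Nx xN]; case: yL => _ _ [Ny yN].
exists (Nx + Ny) => m mN; rewrite big1_seq // => i /andP[_].
rewrite mem_index_iota => /andP[_ im].
case: (leqP Nx i) => iN; first by rewrite xN // repr_coset1 comm1g morph1.
rewrite (yN (m - i)) ?repr_coset1 ?commg1 ?morph1 //.
by rewrite leq_subRL ?(ltnW im) // (leq_trans _ mN) // leq_add2r ltnW.
Qed.

Lemma LG_br_cosets h k x y : 0 < h -> 0 < k -> x \in 'L_h(G) -> y \in 'L_k(G) ->
  br (LG_coset h x) (LG_coset k y) = LG_coset (h + k) [~ x, y].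
Proof.
move=> h0 k0 xL yL; apply: LG_ext => m; rewrite /LG_br /LG_coset.
case: eqVneq => [->|mhk].
  rewrite (prod_nat_only (j := h)); last 2 first.
  - by rewrite h0 -{1}(addn0 h) ltn_add2l.
  - by move=> i _ /negbTE ->; rewrite repr_coset1 comm1g morph1.
  rewrite addKn !eqxx.
  by apply: (coset_commg_eq L2_abelem); rewrite ?coset_reprK ?repr_lcn_quo ?mem_quotient.
rewrite big1_seq // => i /andP[_]; rewrite mem_index_iota => /andP[i0 im].
case: eqVneq => [ih|_]; last by rewrite repr_coset1 comm1g morph1.
case: eqVneq => [mik|_]; last by rewrite repr_coset1 commg1 morph1.
by move: mhk; rewrite -ih -mik subnKC ?eqxx // ltnW.
Qed.

Lemma LG_br_hom h k x y : 0 < h -> 0 < k -> hom h x -> hom k y -> hom (h + k) (br x y).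
Proof.
move=> h0 k0 hx hy.
have xL := LG_repr_lcn h (LG_hom_in hx); have yL := LG_repr_lcn k (LG_hom_in hy).
rewrite (LG_hom_coset hx) (LG_hom_coset hy) LG_br_cosets //.
by apply: LG_coset_hom; [rewrite addn_gt0 h0 | apply: mem_lcn_commg].
Qed.

Lemma LG_br0l x : br zero x = zero.
Proof.
by apply: LG_ext => m; rewrite /LG_br big1 // => i _; rewrite repr_coset1 comm1g morph1.
Qed.

Lemma LG_br0r x : br x zero = zero.
Proof.
by apply: LG_ext => m; rewrite /LG_br big1 // => i _; rewrite repr_coset1 commg1 morph1.
Qed.

Lemma LG_brDl x y w : inL x -> inL y -> inL w -> br (add x y) w = add (br x w) (br y w).
Proof.
move=> xL yL wL; apply: LG_ext => m; rewrite /LG_br /LG_add.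
rewrite -(prod_mulg_abelian _ (quo_lcn_abelian G m)); last 2 first.
- by move=> i; apply: LG_br_term_quo.
- by move=> i; apply: LG_br_term_quo.
apply: eq_big_nat => i /andP[i0 im].
move: (m - i) (subnKC (ltnW im)) => k ekm; subst m.
have k0 : 0 < k by rewrite -(ltn_add2l i) addn0.
have xyL := LG_repr_lcn i (LG_in_add xL yL).
rewrite -coset_commMg ?LG_repr_lcn //.
apply: (coset_commg_eq L2_abelem); rewrite ?groupM ?LG_repr_lcn //.
by rewrite coset_lcnM ?LG_repr_mem // !coset_reprK.
Qed.

Lemma LG_brDr x y w : inL x -> inL y -> inL w -> br w (add x y) = add (br w x) (br w y).
Proof.
move=> xL yL wL; apply: LG_ext => m; rewrite /LG_br /LG_add.
rewrite -(prod_mulg_abelian _ (quo_lcn_abelian G m)); last 2 first.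
- by move=> i; apply: LG_br_term_quo.
- by move=> i; apply: LG_br_term_quo.
apply: eq_big_nat => i /andP[i0 im].
move: (m - i) (subnKC (ltnW im)) => k ekm; subst m.
have k0 : 0 < k by rewrite -(ltn_add2l i) addn0.
have xyL := LG_repr_lcn k (LG_in_add xL yL).
rewrite -coset_commgM ?LG_repr_lcn //.
apply: (coset_commg_eq L2_abelem); rewrite ?groupM ?LG_repr_lcn //.
by rewrite coset_lcnM ?LG_repr_mem // !coset_reprK.
Qed.

Lemma LG_hom_brC d e x y : 0 < d -> 0 < e -> hom d x -> hom e y -> br x y = br y x.
Proof.
move=> d0 e0 hx hy.
have xL := LG_repr_lcn d (LG_hom_in hx); have yL := LG_repr_lcn e (LG_hom_in hy).
rewrite (LG_hom_coset hx) (LG_hom_coset hy) !LG_br_cosets // addnC.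
by apply: LG_coset_eq; rewrite coset_commgC.
Qed.

Lemma LG_brC x y : inL x -> inL y -> br x y = br y x.
Proof.
have brC_hom d x' : 0 < d -> hom d x' -> forall y, inL y -> br x' y = br y x'.
  move=> d0 hx; have x'L := LG_hom_in hx.
  apply: LG_ind => [|y1 y2 y1L y2L IH1 IH2|e y' e0 hy].
  - by rewrite LG_br0l LG_br0r.
  - by rewrite LG_brDl ?LG_brDr ?IH1 ?IH2.
  - exact: LG_hom_brC d0 e0 hx hy.
move=> xL yL; move: x xL; apply: LG_ind => [|x1 x2 x1L x2L IH1 IH2|d x d0 hx].
- by rewrite LG_br0l LG_br0r.
- by rewrite LG_brDl ?LG_brDr ?IH1 ?IH2.
- exact: brC_hom d0 hx y yL.
Qed.

Lemma LG_br_alt x : inL x -> br x x = zero.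
Proof.
move: x; apply: LG_ind => [|x y xL yL IHx IHy|d x d0 hx].
- exact: LG_br0l.
- have xyL := LG_in_add xL yL.
  rewrite LG_brDl // !LG_brDr // IHx IHy LG_add0 LG_addx0 (LG_brC yL xL).
  by rewrite LG_addxx //; apply: LG_br_in.
- have xL := LG_repr_lcn d (LG_hom_in hx).
  by rewrite (LG_hom_coset hx) LG_br_cosets // commgg LG_coset1.
Qed.

Local Hint Resolve LG_in_zero LG_in_add LG_br_in : core.

Definition LG_jacobi (x y z : T) : T :=
  add (br x (br y z)) (add (br y (br z x)) (br z (br x y))).

Lemma LG_jacobi_cycle x y z : inL x -> inL y -> inL z -> LG_jacobi x y z = LG_jacobi y z x.
Proof. by move=> xL yL zL; rewrite /LG_jacobi LG_addC -?LG_addA; auto. Qed.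

Lemma LG_jacobiDl x1 x2 y z : inL x1 -> inL x2 -> inL y -> inL z ->
  LG_jacobi (add x1 x2) y z = add (LG_jacobi x1 y z) (LG_jacobi x2 y z).
Proof.
move=> x1L x2L yL zL; rewrite /LG_jacobi.
have [yzL zx1L zx2L] : [/\ inL (br y z), inL (br z x1) & inL (br z x2)] by split; auto.
have [x1yL x2yL] : inL (br x1 y) /\ inL (br x2 y) by split; auto.
rewrite (LG_brDl x1L x2L yzL) (LG_brDr x1L x2L zL) (LG_brDr zx1L zx2L yL).
rewrite (LG_brDl x1L x2L yL) (LG_brDr x1yL x2yL zL).
rewrite (LG_addACA (br y (br z x1))); auto.
by rewrite (LG_addACA (br x1 (br y z))); auto.
Qed.

Lemma LG_jacobi_hom a b c x y z : 0 < a -> 0 < b -> 0 < c ->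
  hom a x -> hom b y -> hom c z -> LG_jacobi x y z = zero.
Proof.
move=> a0 b0 c0 hx hy hz.
have uL := LG_repr_lcn a (LG_hom_in hx); have vL := LG_repr_lcn b (LG_hom_in hy).
have wL := LG_repr_lcn c (LG_hom_in hz).
rewrite /LG_jacobi (LG_hom_coset hx) (LG_hom_coset hy) (LG_hom_coset hz).
move: (repr (x a)) (repr (y b)) (repr (z c)) uL vL wL => u v w uL vL wL.
have vwL := mem_lcn_commg L2_abelem b0 c0 vL wL.
have wuL := mem_lcn_commg L2_abelem c0 a0 wL uL.
have uvL := mem_lcn_commg L2_abelem a0 b0 uL vL.
have [ab0 bc0 ca0] : [/\ 0 < a + b, 0 < b + c & 0 < c + a] by rewrite !addn_gt0 a0 b0 c0.
rewrite !LG_br_cosets //.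
have -> : b + (c + a) = a + (b + c) by lia.
have -> : c + (a + b) = a + (b + c) by lia.
have [uG vG wG] := And3 (mem_lcn_sub uL) (mem_lcn_sub vL) (mem_lcn_sub wL).
have [pG qG rG] : [/\ [~ u, [~ v, w]] \in G, [~ v, [~ w, u]] \in G & [~ w, [~ u, v]] \in G].
  by rewrite !groupR.
rewrite -(LG_cosetM _ qG rG) -(LG_cosetM _ pG (groupM qG rG)).
by rewrite mulgA (Jacobi_commg L2_abelem) // LG_coset1.
Qed.

Lemma LG_jacobi_ind x y z : inL x -> inL y -> inL z ->
  (forall d x', 0 < d -> hom d x' -> LG_jacobi x' y z = zero) -> LG_jacobi x y z = zero.
Proof.
move=> xL yL zL Jhom; move: x xL; apply: LG_ind => [|x1 x2 x1L x2L J1 J2|]; last exact: Jhom.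
- by rewrite /LG_jacobi !(LG_br0l, LG_br0r) !LG_add0.
- by rewrite LG_jacobiDl // J1 J2 LG_add0.
Qed.

Lemma LG_jacobi0 x y z : inL x -> inL y -> inL z -> LG_jacobi x y z = zero.
Proof.
move=> xL yL zL; apply: LG_jacobi_ind => // a x' a0 hx.
have x'L := LG_hom_in hx; rewrite LG_jacobi_cycle //.
apply: LG_jacobi_ind => // b y' b0 hy.
have y'L := LG_hom_in hy; rewrite LG_jacobi_cycle //.
apply: LG_jacobi_ind => // c z' c0 hz.
exact: LG_jacobi_hom c0 a0 b0 hz hx hy.
Qed.

Lemma LG_homogeneous_decomp x : inL x -> exists s : seq T,
  (forall j, j < size s -> hom j.+1 (nth zero s j)) /\ x = sumL s.
Proof.
move=> xL; have [N ->] := LG_decomp xL; eexists; split; last reflexivity.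
move=> j; rewrite size_map size_iota => jN.
rewrite (nth_map 0) ?size_iota // nth_iota // add1n.
exact/LG_coset_hom/LG_repr_lcn.
Qed.

Lemma LG_sum_hom_eq0 s : (forall j, j < size s -> hom j.+1 (nth zero s j)) ->
  sumL s = zero -> forall j, j < size s -> nth zero s j = zero.
Proof.
move=> s_hom s0 j js; have [_ sj] := s_hom j js; apply: LG_ext => k.
case: (eqVneq k j.+1) => [->|kj]; last by rewrite sj //; apply/eqP.
have := congr1 (fun f : T => f j.+1) s0; rewrite LG_sum_at (big_nth zero).
rewrite (prod_nat_only (j := j)) // => i /andP[_ iS] ij; have [_ si] := s_hom i iS.
by apply: si => -[ei]; rewrite ei eqxx in ij.
Qed.

Lemma LG_graded_Lie : is_graded_Lie_F2 inL add zero br hom.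
Proof.
split; split.
- exact: LG_in_zero.
- exact: LG_in_add.
- exact: LG_addC.
- by move=> x y w _ _ _; apply: LG_addA.
- by move=> x xL; split; [apply: LG_add0 | apply: LG_addxx].
- exact: LG_br_in.
- by move=> x y w xL yL wL; split; [apply: LG_brDl | apply: LG_brDr].
- exact: LG_br_alt.
- exact: LG_jacobi0.
- by move=> m _; split=> [|x y]; [apply: LG_hom_zero | apply: LG_hom_add].
- by move=> m x _; apply: LG_hom_in.
- exact: LG_homogeneous_decomp.
- exact: LG_sum_hom_eq0.
- by move=> h k x y h0 k0; apply: LG_br_hom.
Qed.

End LieAlgebraOfGroup.


Section IteratedBrackets.
Local Open Scope group_scope.
Variables (gT : finGroupType) (G : {group gT}).
Hypotheses (L2_abelem : 2.-abelem 'L_2(G)) (sqr_L2 : {in G, forall x, x * x \in 'L_2(G)}).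

Local Notation T := (LGT G).
Local Notation inL := (@LG_in gT G).
Local Notation add := (@LG_add gT G).
Local Notation zero := (@LG_zero gT G).
Local Notation br := (@LG_br gT G).
Local Notation hom := (@LG_hom gT G).
Local Notation sumL := (lsum add zero).

Lemma LG_hom1_repr_mem s : List.Forall (hom 1) s ->
  List.Forall (fun u => u \in G) [seq repr (t 1%N) | t : T <- s].
Proof.
by move=> hs; apply/List.Forall_map; apply: List.Forall_impl hs => t /LG_hom_in/LG_repr_mem.
Qed.

Lemma LG_hom1_commg_L2 a b : hom 1 a -> hom 1 b -> [~ repr (a 1%N), repr (b 1%N)] \in 'L_2(G).
Proof.
move=> /LG_hom_in/LG_repr_lcn aL /LG_hom_in/LG_repr_lcn bL.
exact: mem_lcn_commg (aL _) (bL _).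
Qed.

Lemma LG_itbr_hom1 s a b : List.Forall (hom 1) s -> hom 1 a -> hom 1 b ->
  itbr br s a b =
  LG_coset G (size s).+2
    (itcomm [seq repr (t 1%N) | t : T <- s] [~ repr (a 1%N), repr (b 1%N)]).
Proof.
move=> + ha hb; have abL := LG_hom1_commg_L2 ha hb.
elim: s => [_ | t s IH /List.Forall_cons_iff [ht hs]] /=.
  have [aL bL] := (LG_repr_lcn 1 (LG_hom_in ha), LG_repr_lcn 1 (LG_hom_in hb)).
  by rewrite /itbr /= {1}(LG_hom_coset ha) {1}(LG_hom_coset hb) LG_br_cosets.
have tL := LG_repr_lcn 1 (LG_hom_in ht).
have := mem_lcn_itcomm L2_abelem (LG_hom1_repr_mem hs) (isT : 0 < 2) abL.
rewrite size_map addn2 => wL.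
by rewrite /itbr /= -/(itbr br s a b) (IH hs) {1}(LG_hom_coset ht) LG_br_cosets.
Qed.

Lemma LG_itbr_perm s s' a b : List.Forall (hom 1) s -> hom 1 a -> hom 1 b ->
  Permutation s s' -> itbr br s a b = itbr br s' a b.
Proof.
move=> hs ha hb P; rewrite !LG_itbr_hom1 //; last exact: Permutation_Forall P hs.
rewrite (Permutation_size P) (itcomm_perm L2_abelem (Permutation_map _ P)) //.
  exact: LG_hom1_repr_mem.
exact: LG_hom1_commg_L2.
Qed.

Lemma LG_itbr_dup s a b j1 j2 : List.Forall (hom 1) s -> hom 1 a -> hom 1 b ->
  j1 < j2 -> j2 < size s -> nth zero s j1 = nth zero s j2 -> itbr br s a b = zero.
Proof.
move=> hs ha hb j12 j2s e.
rewrite LG_itbr_hom1 // (itcomm_dup L2_abelem sqr_L2) ?LG_coset1 ?LG_hom1_commg_L2 //.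
  exact: LG_hom1_repr_mem.
apply/(uniqPn 1); exists j1, j2; rewrite size_map !(nth_map zero) ?e //.
exact: ltn_trans j2s.
Qed.

Lemma LG_br_ker1 x y : inL x -> inL y -> x 1%N = 1 -> y 1%N = 1 -> br x y = zero.
Proof.
move=> xL yL x1 y1; apply: LG_ext => m; rewrite /LG_br big1_seq // => i /andP[_].
rewrite mem_index_iota => /andP[i1 im].
case: (eqVneq i 1%N) => [->|i2]; first by rewrite x1 repr_coset1 comm1g morph1.
case: (eqVneq (m - i) 1%N) => [->|mi2]; first by rewrite y1 repr_coset1 commg1 morph1.
rewrite (commg_L2 L2_abelem) ?morph1 // (mem_lcn_leq _ (LG_repr_lcn _ _)) //; lia.
Qed.

Definition LG_brsum (s : seq (T * T)%type) : T := sumL [seq br p.1 p.2 | p <- s].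

Local Notation pairs_in s := (List.Forall (fun p : (T * T)%type => inL p.1 /\ inL p.2) s).

Lemma LG_brsum_in s : pairs_in s -> inL (LG_brsum s).
Proof.
elim: s => [_|p s IH /List.Forall_cons_iff [[p1L p2L] /IH sL]]; first exact: LG_in_zero.
exact: LG_in_add (LG_br_in L2_abelem p1L p2L) sL.
Qed.

Lemma LG_sum_cat (s1 s2 : seq T) : sumL (s1 ++ s2) = add (sumL s1) (sumL s2).
Proof. by elim: s1 => [|a s IH] /=; rewrite ?LG_add0 // IH LG_addA. Qed.

Lemma LG_brsum_cat s1 s2 : LG_brsum (s1 ++ s2) = add (LG_brsum s1) (LG_brsum s2).
Proof. by rewrite /LG_brsum map_cat LG_sum_cat. Qed.

Lemma LG_coset_brsum d w : 1 < d -> w \in 'L_d(G) ->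
  exists2 s, pairs_in s & LG_coset G d w = LG_brsum s.
Proof.
case: d => [|[|d]] // _ /gen_prodgP [k [c cR ->]].
elim: k c cR => [|k IH] c cR; first by exists [::]; rewrite // big_ord0 LG_coset1.
have cG i : c i \in G by apply: (mem_lcn_sub (m := d.+2)); apply/mem_gen/cR.
rewrite big_ord_recr /= LG_cosetM ?group_prod //.
have [s sP ->] := IH _ (fun i => cR (widen_ord (leqnSn k) i)).
case/imset2P: (cR ord_max) => x y xL yG ->.
exists (s ++ [:: (LG_coset G d.+1 x, LG_coset G 1%N y)]).
  apply/List.Forall_app; split=> //; constructor=> //.
  by split; apply: LG_hom_in (LG_coset_hom _ _); rewrite // lcn1.
by rewrite LG_brsum_cat /LG_brsum /= LG_addx0 LG_br_cosets ?addn1 ?lcn1.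
Qed.

Lemma LG_ker1_brsum x : inL x -> x 1%N = 1 -> exists2 s, pairs_in s & x = LG_brsum s.
Proof.
move=> xL x1; have [N ->] := LG_decomp xL.
have : all (leq 1) (iota 1 N) by apply/allP => j; rewrite mem_iota => /andP[].
elim: (iota 1 N) => [_|j r IH /andP[j1 /IH [s sP e]]]; first by exists [::].
rewrite /= e.
have [s' s'P ->] : exists2 s', pairs_in s' & LG_coset G j (repr (x j)) = LG_brsum s'.
  case: (ltngtP j 1) => [|j2|->]; first by rewrite ltnNge j1.
    exact/LG_coset_brsum/LG_repr_lcn.
  by exists [::]; rewrite // x1 repr_coset1 LG_coset1.
by exists (s' ++ s); [apply/List.Forall_app | rewrite LG_brsum_cat].
Qed.

End IteratedBrackets.


Section ExpansionGroup.
Variables (gT : finGroupType) (G : {group gT}) (n : nat) (phi : gT -> Vn n) (g : 'I_n -> gT).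
Hypothesis expG : n_expansion_group G phi g.

Local Notation T := (LGT G).
Local Notation inL := (@LG_in gT G).
Local Notation add := (@LG_add gT G).
Local Notation zero := (@LG_zero gT G).
Local Notation br := (@LG_br gT G).
Local Notation hom := (@LG_hom gT G).
Local Notation psi := (@LG_phi gT G n phi).

Lemma expansion_phiM : {in G &, forall x y, phi (x * y)%g = (phi x + phi y)%R}.
Proof. by case: expG. Qed.

Lemma expansion_phi1 : phi 1%g = 0%R.
Proof. by apply/(addrI (phi 1)); rewrite -expansion_phiM ?mulg1 ?addr0. Qed.

Lemma expansion_L2E : ('L_2(G))%g = [set x in G | phi x == 0%R].
Proof. by case: expG. Qed.

Lemma expansion_L2_abelem : (2.-abelem 'L_2(G))%g.
Proof. by rewrite expansion_L2E; case: expG. Qed.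

Lemma expansion_L2P x : reflect (x \in G /\ phi x = 0%R) (x \in ('L_2(G))%g).
Proof. by rewrite expansion_L2E inE; apply: (iffP andP) => -[-> /eqP]. Qed.

Lemma expansion_sqr_L2 : {in G, forall x, (x * x)%g \in ('L_2(G))%g}.
Proof. by move=> x xG; apply/expansion_L2P; rewrite groupM // expansion_phiM // Vn_addvv. Qed.

Lemma phi_repr_coset1 w : w \in G -> phi (repr (coset ('L_2(G))%g w)) = phi w.
Proof.
move=> wG; have rG : repr (coset ('L_2(G))%g w) \in G.
  by apply: (mem_lcn_sub (m := 1)); apply/repr_lcn_quo/mem_quotient.
have /expansion_L2P [cG phic] := coset_lcn_eqP wG rG (esym (coset_reprK _)).
by rewrite -(mulKVg w (repr _)) expansion_phiM // phic addr0.
Qed.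

Lemma LG_phi_zero : psi zero = 0%R.
Proof. by rewrite /LG_phi repr_coset1 expansion_phi1. Qed.

Lemma LG_phi_add x y : inL x -> inL y -> psi (add x y) = (psi x + psi y)%R.
Proof.
move=> xL yL; have [xG yG] := (LG_repr_mem 1 xL, LG_repr_mem 1 yL).
rewrite /LG_phi /LG_add -{1}(coset_reprK (x 1)) -{1}(coset_reprK (y 1)).
by rewrite -coset_lcnM // phi_repr_coset1 ?groupM // expansion_phiM.
Qed.

Lemma LG_phi_hom m x : 1 < m -> hom m x -> psi x = 0%R.
Proof.
move=> m2 [_ xm]; rewrite /LG_phi xm ?repr_coset1 ?expansion_phi1 //.
by move=> e; rewrite -e in m2.
Qed.

Lemma LG_phi_br x y : psi (br x y) = 0%R.
Proof. by rewrite /LG_phi /LG_br big_geq // repr_coset1 expansion_phi1. Qed.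

Lemma LG_phi_ker x : inL x -> psi x = 0%R -> x 1 = 1%g.
Proof.
move=> xL e; rewrite -(coset_reprK (x 1)) coset_id //.
exact/expansion_L2P/(conj (LG_repr_mem 1 xL)).
Qed.

Lemma LG_phi_surj (v : Vn n) : exists2 x, inL x & psi x = v.
Proof.
pose w := (\prod_(i < n | v ord0 i == 1%R) g i)%g.
have [wG phiw] : w \in G /\ phi w = (\sum_(i < n | v ord0 i == 1%R) e_ i)%R.
  apply: (big_ind2 (fun a b => a \in G /\ phi a = b)) => [|a1 a2 b1 b2 [a1G <-] [a2G <-]|i _].
  - by rewrite group1 expansion_phi1.
  - by rewrite groupM // expansion_phiM.
  - by case: expG => _ /(_ i) [giG [_ ->]].
exists (LG_coset G 1 w); first exact/LG_hom_in/LG_coset_hom.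
by rewrite /LG_phi /LG_coset /= phi_repr_coset1 // phiw Vn_sum_support.
Qed.

Lemma LG_phi_graded_hom : is_graded_Lie_hom_onto_V inL add zero br hom psi.
Proof.
split.
- exact: LG_phi_zero.
- exact: LG_phi_add.
- exact: LG_phi_hom.
- by move=> x y _ _; apply: LG_phi_br.
- exact: LG_phi_surj.
Qed.

Lemma LG_phi_ker_abelian x y : inL x -> inL y -> psi x = 0%R -> psi y = 0%R ->
  [/\ psi (add x y) = 0%R, psi (br x y) = 0%R & br x y = zero].
Proof.
move=> xL yL px py; split; first by rewrite LG_phi_add // px py addr0.
  exact: LG_phi_br.
exact: (LG_br_ker1 expansion_L2_abelem) (LG_phi_ker xL px) (LG_phi_ker yL py).
Qed.

Lemma LG_phi_brsum s : List.Forall (fun p : (T * T)%type => inL p.1 /\ inL p.2) s ->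
  psi (LG_brsum s) = 0%R.
Proof.
elim: s => [_|p s IH /List.Forall_cons_iff [[p1L p2L] sP]]; first exact: LG_phi_zero.
have sL := LG_brsum_in expansion_L2_abelem sP.
rewrite /LG_brsum /= -/(LG_brsum s) LG_phi_add ?LG_phi_br ?IH ?add0r //.
by apply: LG_br_in => //; apply: expansion_L2_abelem.
Qed.

Lemma LG_phi_kerE x : inL x -> (psi x = 0%R <->
  exists s : seq (T * T)%type,
    (forall j, j < size s -> inL (nth (zero, zero) s j).1 /\ inL (nth (zero, zero) s j).2) /\
    x = lsum add zero [seq br p.1 p.2 | p <- s]).
Proof.
have pairsP s := forall_nthP (zero, zero) (fun p : (T * T)%type => inL p.1 /\ inL p.2) s.
move=> xL; split=> [px | [s [/pairsP sP ->]]]; last exact: LG_phi_brsum.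
have [s sP ex] := LG_ker1_brsum expansion_L2_abelem xL (LG_phi_ker xL px).
by exists s; split; [apply/pairsP | apply: ex].
Qed.

Lemma LG_phi_brbr_basis t1 t2 : hom 1 t1 -> hom 1 t2 ->
  (exists i : 'I_n, psi t1 = e_ i) -> br t1 (br t1 t2) = zero.
Proof.
move=> h1 h2 [i phit1].
have := LG_itbr_hom1 expansion_L2_abelem (List.Forall_cons _ h1 (List.Forall_nil _)) h1 h2.
rewrite /itbr /= => ->; apply: LG_coset_id.
have [giG [gi2 phigi]] : g i \in G /\ (g i * g i = 1)%g /\ phi (g i) = e_ i.
  by case: expG => _ /(_ i) [giG [gi2 phigi]] _ _; rewrite -expg2.
have r1G := LG_repr_mem 1 (LG_hom_in h1); have r2G := LG_repr_mem 1 (LG_hom_in h2).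
have giV : (g i)^-1%g = g i by apply/eqP; rewrite eq_invg_mul gi2.
have cL : ((g i)^-1 * repr (t1 1%N))%g \in ('L_2(G))%g.
  by apply/expansion_L2P; rewrite giV groupM // expansion_phiM // phigi -phit1 Vn_addvv.
rewrite -(mulKVg (g i) (repr (t1 1))).
by apply: (commg_twice_involution expansion_L2_abelem).
Qed.

End ExpansionGroup.

Unset Implicit Arguments.

Theorem proposition3p3 (gT : finGroupType) (G : {group gT}) (n : nat)
    (phi : gT -> Vn n) (g : 'I_n -> gT) :
  n_expansion_group G phi g ->
  n_expansion_Lie (@LG_in gT G) (@LG_add gT G) (@LG_zero gT G)
    (@LG_br gT G) (@LG_hom gT G) (@LG_phi gT G n phi).
Proof.
move=> expG; have L2_abelem := expansion_L2_abelem expG.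
have sqr_L2 := expansion_sqr_L2 expG.
split.
- exact: (conj (LG_graded_Lie L2_abelem sqr_L2) (LG_phi_graded_hom expG)).
- exact: LG_phi_ker_abelian expG.
- exact: LG_phi_kerE expG.
- split=> [s s' a b _ /forall_nthP hs ha hb | s a b _ /forall_nthP hs ha hb j1 j2].
  + exact: LG_itbr_perm.
  + exact: (LG_itbr_dup L2_abelem sqr_L2).
- exact: LG_phi_brbr_basis expG.
Qed.
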